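(* If $t,t'\in T^{*,\circ}$ satisfy $t=_{ALD}t'$, then $I(t)=I(t')$ and $J(t)=_{LD}J(t')$, the latter meaning that the sequences $J(t)$ and $J(t')$ have equal lengths and pairwise $LD$-equivalent entries.
   Context: For $n\ge1$, $T_n^*$ (resp. $T_n^\circ$, $T_n^{*,\circ}$) is the set of terms built from variables $x_1,\dots,x_n$ using the binary operator $*$ (resp. $\circ$, resp. both); $T^*=\bigcup_n T_n^*$, $T^{*,\circ}=\bigcup_nT_n^{*,\circ}$, $x$ denotes $x_1$, and $T_1^\circ$ is the set of $\circ$-terms in $x$. $=_{LD}$ is the congruence on $T^*$ generated by all instances of $x*(y*z)=(x*y)*(x*z)$ (LD); $=_{ALD}$ is the congruence on $T^{*,\circ}$ generated by all instances of (LD), $x*(y*z)=(x\circ y)*z$ and $x*(y\circ z)=(x*y)\circ(x*z)$. For a set $S$ with binary operation $*$, $\widehat S$ denotes the finite nonempty sequences over $S$, $\frown$ concatenation, and $\vec s\mathbin{\vec{*}}\vec t=(s_1*\cdots*s_p*t_1,\dots,s_1*\cdots*s_p*t_q)$ ($p,q$ the lengths; parentheses added on the right). For $t\in T^{*,\circ}$, $I(t)\in T_1^\circ$ and $J(t)\in\widehat{T^*}$ are defined inductively: if $t$ is a variable, $(I(t),J(t))=(x,(t))$; if $t=t_1*t_2$, $(I(t),J(t))=(I(t_2),J(t_1)\mathbin{\vec{*}}J(t_2))$; if $t=t_1\circ t_2$, $(I(t),J(t))=(I(t_1)\circ I(t_2),J(t_1)\frown J(t_2))$. *)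

From Stdlib Require Import List.
Import ListNotations.

Inductive sterm : Type :=
| SVar : nat -> sterm
| SStar : sterm -> sterm -> sterm.

Inductive aterm : Type :=
| AVar : nat -> aterm
| AStar : aterm -> aterm -> aterm
| ACirc : aterm -> aterm -> aterm.

Inductive cterm : Type :=
| CX : cterm
| CCirc : cterm -> cterm -> cterm.

Inductive ld_eq : sterm -> sterm -> Prop :=
| ld_refl : forall t, ld_eq t t
| ld_sym : forall t u, ld_eq t u -> ld_eq u t
| ld_trans : forall t u v, ld_eq t u -> ld_eq u v -> ld_eq t v
| ld_cong : forall t1 t2 u1 u2, ld_eq t1 u1 -> ld_eq t2 u2 ->
    ld_eq (SStar t1 t2) (SStar u1 u2)
| ld_ax : forall x y z,
    ld_eq (SStar x (SStar y z)) (SStar (SStar x y) (SStar x z)).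

Inductive ald_eq : aterm -> aterm -> Prop :=
| ald_refl : forall t, ald_eq t t
| ald_sym : forall t u, ald_eq t u -> ald_eq u t
| ald_trans : forall t u v, ald_eq t u -> ald_eq u v -> ald_eq t v
| ald_cong_star : forall t1 t2 u1 u2, ald_eq t1 u1 -> ald_eq t2 u2 ->
    ald_eq (AStar t1 t2) (AStar u1 u2)
| ald_cong_circ : forall t1 t2 u1 u2, ald_eq t1 u1 -> ald_eq t2 u2 ->
    ald_eq (ACirc t1 t2) (ACirc u1 u2)
| ald_ld : forall x y z,
    ald_eq (AStar x (AStar y z)) (AStar (AStar x y) (AStar x z))
| ald_a2 : forall x y z,
    ald_eq (AStar x (AStar y z)) (AStar (ACirc x y) z)
| ald_a3 : forall x y z,
    ald_eq (AStar x (ACirc y z)) (ACirc (AStar x y) (AStar x z)).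

(* s vec* t = (s_1*...*s_p*t_1, ..., s_1*...*s_p*t_q),
   parentheses added on the right: s_1*(s_2*(...*(s_p*t_j))). *)
Definition vstar (s t : list sterm) : list sterm :=
  map (fun tj => fold_right SStar tj s) t.

Fixpoint I (t : aterm) : cterm :=
  match t with
  | AVar _ => CX
  | AStar _ t2 => I t2
  | ACirc t1 t2 => CCirc (I t1) (I t2)
  end.

Fixpoint J (t : aterm) : list sterm :=
  match t with
  | AVar n => [SVar n]
  | AStar t1 t2 => vstar (J t1) (J t2)
  | ACirc t1 t2 => J t1 ++ J t2
  end.

(* Write [s . c := s_1 * (... * (s_p * c))] for the left action of a sequence
   on a [*]-term, so that [vstar s t] is [s . t_j] taken entrywise.  Then the
   two mixed axioms are sent by [J] to the plain equalities
   [vstar s (vstar t u) = vstar (s ++ t) u] and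
   [vstar s (t ++ u) = vstar s t ++ vstar s u], while (LD) becomes the entrywise
   identity [s . (t . c) =_LD (vstar s t) . (s . c)], obtained by pushing (LD)
   through [s] one letter at a time.  [I] only sees the [o]-skeleton, which no
   axiom changes. *)

From Stdlib Require Import List.

Section Forall2_equivalence.

Variables (A : Type) (R : A -> A -> Prop).

Lemma Forall2_reflexive : (forall x, R x x) -> forall l, Forall2 R l l.
Proof. intros Hrefl l; induction l; constructor; auto. Qed.

Lemma Forall2_symmetric (l m : list A) :
  (forall x y, R x y -> R y x) -> Forall2 R l m -> Forall2 R m l.
Proof. intros Hsym; induction 1; constructor; auto. Qed.

Lemma Forall2_transitive (l m n : list A) :
  (forall x y z, R x y -> R y z -> R x z) ->
  Forall2 R l m -> Forall2 R m n -> Forall2 R l n.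
Proof.
  intros Htrans Hlm; revert n.
  induction Hlm; intros n Hmn; inversion Hmn; subst; constructor; eauto.
Qed.

Lemma Forall2_map_pointwise (B : Type) (f g : B -> A) (l : list B) :
  (forall x, R (f x) (g x)) -> Forall2 R (map f l) (map g l).
Proof. intros Hfg; induction l; constructor; auto. Qed.

End Forall2_equivalence.

Arguments Forall2_reflexive {A R}.
Arguments Forall2_symmetric {A R l m}.
Arguments Forall2_transitive {A R l m n}.
Arguments Forall2_map_pointwise {A R B f g}.

Lemma fold_star_cong (s s' : list sterm) (c c' : sterm) :
  Forall2 ld_eq s s' -> ld_eq c c' ->
  ld_eq (fold_right SStar c s) (fold_right SStar c' s').
Proof. intros Hs Hc; induction Hs; simpl; auto using ld_cong. Qed.

Lemma vstar_cong (s s' t t' : list sterm) :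
  Forall2 ld_eq s s' -> Forall2 ld_eq t t' ->
  Forall2 ld_eq (vstar s t) (vstar s' t').
Proof.
  intros Hs Ht; unfold vstar.
  induction Ht; simpl; constructor; auto using fold_star_cong.
Qed.

Lemma fold_star_distr (s : list sterm) (a b : sterm) :
  ld_eq (fold_right SStar (SStar a b) s)
        (SStar (fold_right SStar a s) (fold_right SStar b s)).
Proof.
  induction s as [|x s IH]; simpl.
  - apply ld_refl.
  - eapply ld_trans; [apply ld_cong; [apply ld_refl | exact IH] | apply ld_ax].
Qed.

Lemma fold_star_fold_star (s t : list sterm) (c : sterm) :
  ld_eq (fold_right SStar (fold_right SStar c t) s)
        (fold_right SStar (fold_right SStar c s) (vstar s t)).
Proof.
  induction t as [|y t IH]; simpl.
  - apply ld_refl.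
  - eapply ld_trans; [apply fold_star_distr | apply ld_cong; [apply ld_refl | exact IH]].
Qed.

Lemma vstar_ld (s t u : list sterm) :
  Forall2 ld_eq (vstar s (vstar t u)) (vstar (vstar s t) (vstar s u)).
Proof.
  unfold vstar at 1 2 3 5; rewrite !map_map.
  apply Forall2_map_pointwise; intros c; apply fold_star_fold_star.
Qed.

Lemma vstar_vstar (s t u : list sterm) :
  vstar s (vstar t u) = vstar (s ++ t) u.
Proof.
  unfold vstar; rewrite map_map.
  apply map_ext; intros c; symmetry; apply fold_right_app.
Qed.

Lemma vstar_app (s t u : list sterm) :
  vstar s (t ++ u) = vstar s t ++ vstar s u.
Proof. apply map_app. Qed.

Theorem lemma1p9 (t t' : aterm) :
  ald_eq t t' -> I t = I t' /\ Forall2 ld_eq (J t) (J t').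
Proof.
  pose proof (Forall2_reflexive ld_refl) as ld_list_refl.
  induction 1 as [ | | | | | x y z | x y z | x y z ]; simpl.
  - auto.
  - destruct IHald_eq; split; auto using (Forall2_symmetric ld_sym).
  - destruct IHald_eq1, IHald_eq2; split;
      [congruence | eauto using (Forall2_transitive ld_trans)].
  - destruct IHald_eq1, IHald_eq2; split; auto using vstar_cong.
  - destruct IHald_eq1, IHald_eq2; split; [congruence | auto using Forall2_app].
  - split; [reflexivity | apply vstar_ld].
  - rewrite vstar_vstar; auto.
  - rewrite vstar_app; auto.
Qed.
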